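(* Let $L$ be a localization functor on abelian groups with unit $a$, let $\kappa$ be a cardinal, $F_\kappa=\bigoplus_\kappa\mathbb{Z}$, and let $g:LF_\kappa\to\prod_\kappa L\mathbb{Z}$ be the unique homomorphism with $g\circ a_{F_\kappa}$ equal to the composite $F_\kappa\xrightarrow{\bigoplus_\kappa a_{\mathbb{Z}}}\bigoplus_\kappa L\mathbb{Z}\subseteq\prod_\kappa L\mathbb{Z}$. Then the image $N^\kappa_L$ of $g$ is $L_{a}$-local, where $a=a_{F_\kappa}$; moreover $N^\kappa_L$ is the least $L_a$-local subgroup of $\prod_\kappa L\mathbb{Z}$ containing the image of $\bigoplus_\kappa\mathbb{Z}$.
   Context: All groups are abelian. A localization is a functor $L:\mathcal{Ab}\to\mathcal{Ab}$ with a natural transformation $a:\mathrm{Id}\to L$ such that for every group $X$ we have $a_{LX}=La_X$ and $a_{LX}:LX\to LLX$ is an isomorphism; $X$ is $L$-local if $a_X$ is an isomorphism. A homomorphism $f:X\to Y$ is orthogonal to $B$ if composition with $f$ induces a bijection $\mathop{\rm Hom}(Y,B)\to\mathop{\rm Hom}(X,B)$; the $f$-localization $L_f$ is the localization whose local groups are exactly those $D$ to which $f$ is orthogonal. The product $\prod_\kappa L\mathbb{Z}$ is $L$-local, so $g$ exists and is unique. *)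

From Stdlib Require Import ZArith List Lia FunctionalExtensionality ProofIrrelevance.
Set Implicit Arguments.

Record AbGroup := {
  carrier :> Type;
  gzero : carrier;
  gadd : carrier -> carrier -> carrier;
  gopp : carrier -> carrier;
  gaddA : forall x y z, gadd x (gadd y z) = gadd (gadd x y) z;
  gaddC : forall x y, gadd x y = gadd y x;
  gadd0 : forall x, gadd gzero x = x;
  gaddN : forall x, gadd (gopp x) x = gzero
}.
Arguments gzero {_}.
Arguments gadd {_}.
Arguments gopp {_}.
Arguments gaddA {_}.
Arguments gaddC {_}.
Arguments gadd0 {_}.
Arguments gaddN {_}.

Record Hom (X Y : AbGroup) := {
  hfun :> X -> Y;
  hfun_add : forall x y, hfun (gadd x y) = gadd (hfun x) (hfun y)
}.

Definition idH (X : AbGroup) : Hom X X :=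
  {| hfun := fun x => x; hfun_add := fun x y => eq_refl |}.

Lemma compH_add (X Y Z : AbGroup) (f : Hom X Y) (g : Hom Y Z) :
  forall x y, g (f (gadd x y)) = gadd (g (f x)) (g (f y)).
Proof. intros x y. rewrite hfun_add. apply hfun_add. Qed.

Definition compH (X Y Z : AbGroup) (g : Hom Y Z) (f : Hom X Y) : Hom X Z :=
  {| hfun := fun x => g (f x); hfun_add := compH_add f g |}.

Definition bijective_fun (A B : Type) (f : A -> B) : Prop :=
  (forall x y, f x = f y -> x = y) /\ (forall b, exists a, f a = b).

Record localization := {
  Lob : AbGroup -> AbGroup;
  Lmap : forall X Y : AbGroup, Hom X Y -> Hom (Lob X) (Lob Y);
  Lmap_ext : forall X Y (f g : Hom X Y), (forall x, f x = g x) ->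
               forall y, Lmap f y = Lmap g y;
  Lmap_id : forall X y, Lmap (idH X) y = y;
  Lmap_comp : forall X Y Z (f : Hom X Y) (g : Hom Y Z) y,
               Lmap (compH g f) y = Lmap g (Lmap f y);
  Lunit : forall X : AbGroup, Hom X (Lob X);
  Lunit_nat : forall X Y (f : Hom X Y) x, Lmap f (Lunit X x) = Lunit Y (f x);
  Lunit_idem : forall X y, Lunit (Lob X) y = Lmap (Lunit X) y;
  Lunit_iso : forall X, bijective_fun (Lunit (Lob X))
}.

Definition orthogonal (X Y : AbGroup) (f : Hom X Y) (B : AbGroup) : Prop :=
  (forall h1 h2 : Hom Y B, (forall x, h1 (f x) = h2 (f x)) -> forall y, h1 y = h2 y) /\
  (forall h : Hom X B, exists h' : Hom Y B, forall x, h' (f x) = h x).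

Definition Lf_local (X Y : AbGroup) (f : Hom X Y) (D : AbGroup) : Prop :=
  orthogonal f D.

Definition Zgrp : AbGroup :=
  {| carrier := Z; gzero := 0%Z; gadd := Z.add; gopp := Z.opp;
     gaddA := Z.add_assoc; gaddC := Z.add_comm; gadd0 := Z.add_0_l;
     gaddN := Z.add_opp_diag_l |}.

(** Free abelian group on K: the direct sum of K copies of Z
    (finitely supported functions K -> Z). *)
Definition fsupp (K : Type) (f : K -> Z) : Prop :=
  exists l : list K, forall k, ~ In k l -> f k = 0%Z.

Definition FS (K : Type) := { f : K -> Z | fsupp f }.

Lemma fsupp0 K : fsupp (fun _ : K => 0%Z).
Proof. exists nil. auto. Qed.

Lemma fsuppD K (f g : K -> Z) : fsupp f -> fsupp g -> fsupp (fun k => (f k + g k)%Z).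
Proof.
  intros [l1 H1] [l2 H2]. exists (l1 ++ l2). intros k Hk.
  rewrite H1, H2; auto; intro; apply Hk; apply in_or_app; auto.
Qed.

Lemma fsuppN K (f : K -> Z) : fsupp f -> fsupp (fun k => (- f k)%Z).
Proof. intros [l H]. exists l. intros k Hk. rewrite H; auto. Qed.

Definition FS0 K : FS K := exist _ _ (fsupp0 K).
Definition FSadd K (x y : FS K) : FS K :=
  exist _ _ (fsuppD (proj2_sig x) (proj2_sig y)).
Definition FSopp K (x : FS K) : FS K := exist _ _ (fsuppN (proj2_sig x)).

Lemma FS_eq K (x y : FS K) : (forall k, proj1_sig x k = proj1_sig y k) -> x = y.
Proof.
  destruct x as [f p], y as [g q]; simpl; intro H.
  assert (f = g) by (apply functional_extensionality; auto). subst.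
  f_equal; apply proof_irrelevance.
Qed.

Definition FreeSum (K : Type) : AbGroup.
Proof.
  refine {| carrier := FS K; gzero := FS0 K; gadd := @FSadd K; gopp := @FSopp K |};
  intros; apply FS_eq; simpl; intros; lia.
Defined.

Definition Prod (K : Type) (A : AbGroup) : AbGroup.
Proof.
  refine {| carrier := K -> A; gzero := fun _ => gzero;
            gadd := fun f g k => gadd (f k) (g k);
            gopp := fun f k => gopp (f k) |};
  intros; apply functional_extensionality; intro k;
  [apply gaddA | apply gaddC | apply gadd0 | apply gaddN].
Defined.

Record subgroup (G : AbGroup) := {
  smem :> G -> Prop;
  smem0 : smem gzero;
  smemD : forall x y, smem x -> smem y -> smem (gadd x y);
  smemN : forall x, smem x -> smem (gopp x)
}.

Lemma sub_eq (G : AbGroup) (S : subgroup G) (x y : {g : G | S g}) :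
  proj1_sig x = proj1_sig y -> x = y.
Proof.
  destruct x, y; simpl; intro; subst; f_equal; apply proof_irrelevance.
Qed.

Definition subgroup_group (G : AbGroup) (S : subgroup G) : AbGroup.
Proof.
  refine {| carrier := {g : G | S g};
            gzero := exist _ gzero (smem0 S);
            gadd := fun x y => exist _ _ (@smemD _ S _ _ (proj2_sig x) (proj2_sig y));
            gopp := fun x => exist _ _ (@smemN _ S _ (proj2_sig x)) |};
  intros; apply sub_eq; simpl;
  [apply gaddA | apply gaddC | apply gadd0 | apply gaddN].
Defined.

Lemma hom0 (X Y : AbGroup) (f : Hom X Y) : f gzero = gzero.
Proof.
  assert (E : gadd (f gzero) (f gzero) = f gzero)
    by (rewrite <- hfun_add, gadd0; reflexivity).
  transitivity (gadd (gadd (gopp (f gzero)) (f gzero)) (f gzero)).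
  { rewrite gaddN, gadd0; reflexivity. }
  rewrite <- gaddA, E. apply gaddN.
Qed.

Lemma gopp_hom (X Y : AbGroup) (f : Hom X Y) x : f (gopp x) = gopp (f x).
Proof.
  assert (E : gadd (f (gopp x)) (f x) = gzero)
    by (rewrite <- hfun_add, gaddN; apply hom0).
  rewrite <- (gadd0 (f (gopp x))), <- (gaddN (f x)), <- gaddA,
          (gaddC (f x) (f (gopp x))), E, gaddC, gadd0. reflexivity.
Qed.

Definition image_subgroup (X Y : AbGroup) (f : Hom X Y) : subgroup Y.
Proof.
  refine {| smem := fun y => exists x, f x = y |}.
  - exists gzero. apply hom0.
  - intros y1 y2 [x1 <-] [x2 <-]. exists (gadd x1 x2). apply hfun_add.
  - intros y [x <-]. exists (gopp x). apply gopp_hom.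
Defined.

(** The composite F_K --(+)_K a_Z--> (+)_K LZ  c  prod_K LZ, as a function. *)
Definition sum_unit (L : localization) (K : Type) (x : FreeSum K) : Prod K (Lob L Zgrp) :=
  fun k => Lunit L Zgrp (proj1_sig x k).

(* Both halves rest on two facts: a homomorphism out of L F_K into a subgroup of
   the L-local group prod_K L Z is determined by its composite with a, and the free
   group F_K is projective.  For h : F_K -> N, lift h through the surjection
   g : L F_K -> N, extend the lift over a using that L F_K is local, and compose
   with g.  Conversely, if S is L_a-local and contains the image of F_K, the
   extension of F_K -> S over a agrees with g on a(F_K), hence everywhere, so
   g lands in S. *)
From Stdlib Require Import ZArith List Lia FunctionalExtensionality ProofIrrelevance
  ClassicalEpsilon Permutation.
Set Implicit Arguments.

Lemma gadd0r {A : AbGroup} (x : A) : gadd x gzero = x.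
Proof. rewrite gaddC. apply gadd0. Qed.

Lemma gaddIr {A : AbGroup} (x y z : A) : gadd x z = gadd y z -> x = y.
Proof.
  intro H. rewrite <- (gadd0r x), <- (gadd0r y), <- (gaddN z), (gaddC (gopp z) z),
    !gaddA, H. reflexivity.
Qed.

Lemma gopp0 {A : AbGroup} : gopp (@gzero A) = gzero.
Proof. pose proof (gaddN (@gzero A)) as H. rewrite gadd0r in H. exact H. Qed.

Lemma gaddACA {A : AbGroup} (p q r s : A) :
  gadd (gadd p q) (gadd r s) = gadd (gadd p r) (gadd q s).
Proof. rewrite <- !gaddA. f_equal. rewrite !gaddA. f_equal. apply gaddC. Qed.

Lemma goppD {A : AbGroup} (x y : A) : gopp (gadd x y) = gadd (gopp x) (gopp y).
Proof.
  apply gaddIr with (z := gadd x y). rewrite gaddN, gaddACA, !gaddN, gadd0. reflexivity.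
Qed.

Lemma gsub_eq {A : AbGroup} (u b c d : A) :
  gadd u d = gadd c b -> gadd u (gopp b) = gadd c (gopp d).
Proof.
  intro H. apply gaddIr with (z := gadd b d). rewrite <- !gaddA.
  rewrite (gaddA (gopp b) b d), gaddN, gadd0.
  rewrite (gaddC b d), (gaddA (gopp d) d b), gaddN, gadd0. exact H.
Qed.

Fixpoint natmul {A : AbGroup} (n : nat) (y : A) : A :=
  match n with O => gzero | S m => gadd y (natmul m y) end.

Lemma natmulD {A : AbGroup} m n (y : A) :
  natmul (m + n) y = gadd (natmul m y) (natmul n y).
Proof.
  induction m; simpl.
  - rewrite gadd0. reflexivity.
  - rewrite IHm, gaddA. reflexivity.
Qed.

Definition zmul {A : AbGroup} (z : Z) (y : A) : A :=
  gadd (natmul (Z.to_nat z) y) (gopp (natmul (Z.to_nat (- z)) y)).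

Lemma zmulD {A : AbGroup} m n (y : A) : zmul (m + n) y = gadd (zmul m y) (zmul n y).
Proof.
  unfold zmul. rewrite gaddACA, <- goppD, <- !natmulD. apply gsub_eq.
  rewrite <- !natmulD. f_equal. lia.
Qed.

Lemma zmul0 {A : AbGroup} (y : A) : zmul 0 y = gzero.
Proof. unfold zmul. simpl. rewrite gadd0, gopp0. reflexivity. Qed.

Lemma hom_natmul {A B : AbGroup} (f : Hom A B) n y : f (natmul n y) = natmul n (f y).
Proof.
  induction n; simpl.
  - apply hom0.
  - rewrite hfun_add, IHn. reflexivity.
Qed.

Lemma hom_zmul {A B : AbGroup} (f : Hom A B) z y : f (zmul z y) = zmul z (f y).
Proof. unfold zmul. rewrite hfun_add, gopp_hom, !hom_natmul. reflexivity. Qed.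

Definition lsum {A : AbGroup} {K : Type} (l : list K) (c : K -> Z) (y : K -> A) : A :=
  fold_right (fun k acc => gadd (zmul (c k) (y k)) acc) gzero l.

Lemma hom_lsum {A B : AbGroup} (f : Hom A B) {K : Type} (l : list K) c y :
  f (lsum l c y) = lsum l c (fun k => f (y k)).
Proof.
  induction l; simpl.
  - apply hom0.
  - rewrite hfun_add, hom_zmul, IHl. reflexivity.
Qed.

Lemma lsumD {A : AbGroup} {K : Type} (l : list K) c d (y : K -> A) :
  lsum l (fun k => (c k + d k)%Z) y = gadd (lsum l c y) (lsum l d y).
Proof.
  induction l; simpl.
  - rewrite gadd0. reflexivity.
  - rewrite IHl, zmulD, gaddACA. reflexivity.
Qed.

Lemma lsum_filter_nz {A : AbGroup} {K : Type} (l : list K) c (y : K -> A) :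
  lsum l c y = lsum (filter (fun k => negb (Z.eqb (c k) 0)) l) c y.
Proof.
  induction l; simpl; [reflexivity|].
  destruct (Z.eqb_spec (c a) 0) as [E|E]; simpl.
  - rewrite E, zmul0, gadd0. exact IHl.
  - rewrite IHl. reflexivity.
Qed.

Lemma perm_lsum {A : AbGroup} {K : Type} (l1 l2 : list K) c (y : K -> A) :
  Permutation l1 l2 -> lsum l1 c y = lsum l2 c y.
Proof.
  induction 1; simpl; try reflexivity.
  - rewrite IHPermutation. reflexivity.
  - rewrite !gaddA, (gaddC (zmul (c y0) (y y0))). reflexivity.
  - rewrite IHPermutation1. exact IHPermutation2.
Qed.

Definition Kdec {K : Type} (a b : K) : {a = b} + {a <> b} :=
  excluded_middle_informative (a = b).

Lemma eq_lsum_supp {A : AbGroup} {K : Type} (l1 l2 : list K) c (y : K -> A) :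
  NoDup l1 -> NoDup l2 ->
  (forall k, ~ In k l1 -> c k = 0%Z) -> (forall k, ~ In k l2 -> c k = 0%Z) ->
  lsum l1 c y = lsum l2 c y.
Proof.
  intros N1 N2 H1 H2. rewrite (lsum_filter_nz l1), (lsum_filter_nz l2). apply perm_lsum.
  apply NoDup_Permutation; try (apply NoDup_filter; assumption).
  intro k. rewrite !filter_In.
  split; intros [Hi Hc]; split; auto; destruct (Z.eqb_spec (c k) 0); try discriminate.
  - destruct (in_dec Kdec k l2); auto. exfalso; auto.
  - destruct (in_dec Kdec k l1); auto. exfalso; auto.
Qed.

Definition supp_list {K : Type} (x : FS K) : list K :=
  nodup Kdec (proj1_sig (constructive_indefinite_description _ (proj2_sig x))).

Lemma supp_list_nodup {K : Type} (x : FS K) : NoDup (supp_list x).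
Proof. apply NoDup_nodup. Qed.

Lemma notin_supp_list {K : Type} (x : FS K) k :
  ~ In k (supp_list x) -> proj1_sig x k = 0%Z.
Proof.
  unfold supp_list. destruct (constructive_indefinite_description _ _) as [l Hl]; simpl.
  intro Hk. apply Hl. intro H. apply Hk. apply nodup_In. exact H.
Qed.

Definition free_lift_fun {A : AbGroup} {K : Type} (y : K -> A) (x : FreeSum K) : A :=
  lsum (supp_list x) (proj1_sig x) y.

Lemma free_lift_fun_supp {A : AbGroup} {K : Type} (y : K -> A) (x : FreeSum K) l :
  NoDup l -> (forall k, ~ In k l -> proj1_sig x k = 0%Z) ->
  free_lift_fun y x = lsum l (proj1_sig x) y.
Proof. intros. apply eq_lsum_supp; auto using supp_list_nodup, notin_supp_list. Qed.

Lemma free_lift_funD {A : AbGroup} {K : Type} (y : K -> A) (x x' : FreeSum K) :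
  free_lift_fun y (gadd x x') = gadd (free_lift_fun y x) (free_lift_fun y x').
Proof.
  set (l := nodup Kdec (supp_list x ++ supp_list x')).
  assert (Nl : NoDup l) by apply NoDup_nodup.
  assert (H1 : forall k, ~ In k l -> proj1_sig x k = 0%Z).
  { intros k Hk. apply notin_supp_list. intro; apply Hk, nodup_In, in_or_app; auto. }
  assert (H2 : forall k, ~ In k l -> proj1_sig x' k = 0%Z).
  { intros k Hk. apply notin_supp_list. intro; apply Hk, nodup_In, in_or_app; auto. }
  rewrite (free_lift_fun_supp y x Nl H1), (free_lift_fun_supp y x' Nl H2),
    (@free_lift_fun_supp _ _ y (gadd x x') l Nl).
  - apply lsumD.
  - intros k Hk. simpl. rewrite H1, H2; auto.
Qed.

Definition free_lift {A : AbGroup} {K : Type} (y : K -> A) : Hom (FreeSum K) A :=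
  {| hfun := free_lift_fun y; hfun_add := free_lift_funD y |}.

Lemma ebas_supp {K : Type} (k : K) : fsupp (fun j => if Kdec j k then 1%Z else 0%Z).
Proof.
  exists (k :: nil). intros j Hj. destruct (Kdec j k); auto.
  subst. exfalso. apply Hj. left. reflexivity.
Qed.

Definition ebas {K : Type} (k : K) : FreeSum K := exist _ _ (ebas_supp k).

Lemma natmul_FreeSum {K : Type} n (v : FreeSum K) j :
  proj1_sig (natmul n v) j = (Z.of_nat n * proj1_sig v j)%Z.
Proof.
  induction n; [reflexivity|].
  change (proj1_sig v j + proj1_sig (natmul n v) j = Z.of_nat (S n) * proj1_sig v j)%Z.
  rewrite IHn. lia.
Qed.

Lemma zmul_FreeSum {K : Type} z (v : FreeSum K) j :
  proj1_sig (zmul z v) j = (z * proj1_sig v j)%Z.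
Proof.
  unfold zmul. simpl. rewrite !natmul_FreeSum.
  replace (Z.of_nat (Z.to_nat z)) with (z + Z.of_nat (Z.to_nat (- z)))%Z by lia.
  ring.
Qed.

Lemma lsum_ebas {K : Type} (l : list K) c j : NoDup l ->
  proj1_sig (lsum l c ebas) j = if in_dec Kdec j l then c j else 0%Z.
Proof.
  induction l as [|k l IH]; intro Nd; simpl; [reflexivity|].
  inversion Nd; subst.
  change (proj1_sig (zmul (c k) (ebas k)) j + proj1_sig (lsum l c ebas) j
          = (if in_dec Kdec j (k :: l) then c j else 0))%Z.
  rewrite zmul_FreeSum, IH by assumption. simpl.
  destruct (Kdec j k) as [E|E]; [subst|].
  - destruct (Kdec k k); [|congruence]. destruct (in_dec Kdec k l); [contradiction|]. lia.
  - destruct (Kdec k j); [congruence|]. destruct (in_dec Kdec j l); lia.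
Qed.

Lemma FreeSum_decomp {K : Type} (x : FreeSum K) :
  x = lsum (supp_list x) (proj1_sig x) ebas.
Proof.
  apply FS_eq. intro j. rewrite lsum_ebas by apply supp_list_nodup.
  destruct (in_dec Kdec j (supp_list x)) as [|Hj]; auto using notin_supp_list.
Qed.

Lemma free_lift_comp {A B : AbGroup} {K : Type} (p : Hom A B) (y : K -> A) x :
  p (free_lift y x) = free_lift (fun k => p (y k)) x.
Proof. apply hom_lsum. Qed.

Lemma hom_FreeSum_free_lift {B : AbGroup} {K : Type} (h : Hom (FreeSum K) B) x :
  h x = free_lift (fun k => h (ebas k)) x.
Proof. rewrite (FreeSum_decomp x) at 1. apply hom_lsum. Qed.

Lemma FreeSum_projective {K : Type} {A B : AbGroup} (p : Hom A B)
  (p_surj : forall b, exists a, p a = b) (h : Hom (FreeSum K) B) :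
  exists h0 : Hom (FreeSum K) A, forall x, p (h0 x) = h x.
Proof.
  destruct (choice (fun k a => p a = h (ebas k)) (fun k => p_surj (h (ebas k)))) as [y Hy].
  exists (free_lift y). intro x.
  rewrite free_lift_comp, (hom_FreeSum_free_lift h x).
  replace (fun k => p (y k)) with (fun k => h (ebas k)); [reflexivity|].
  apply functional_extensionality. intro k. symmetry. apply Hy.
Qed.

Definition precomp_injective (X Y : AbGroup) (f : Hom X Y) (B : AbGroup) : Prop :=
  forall h1 h2 : Hom Y B, (forall x, h1 (f x) = h2 (f x)) -> forall y, h1 y = h2 y.

Definition precomp_surjective (X Y : AbGroup) (f : Hom X Y) (B : AbGroup) : Prop :=
  forall h : Hom X B, exists h' : Hom Y B, forall x, h' (f x) = h x.

Definition corestr (X G : AbGroup) (S : subgroup G) (f : Hom X G) (fS : forall x, S (f x)) :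
  Hom X (subgroup_group S).
Proof.
  refine {| hfun := fun x => (exist _ (f x) (fS x) : subgroup_group S) |}.
  intros. apply sub_eq. apply hfun_add.
Defined.

Definition inclH (G : AbGroup) (S : subgroup G) : Hom (subgroup_group S) G :=
  {| hfun := (fun s : {g : G | S g} => proj1_sig s) : subgroup_group S -> G;
     hfun_add := fun _ _ => eq_refl |}.

Definition projH {K : Type} {A : AbGroup} (k : K) : Hom (Prod K A) A :=
  {| hfun := (fun f : K -> A => f k) : Prod K A -> A; hfun_add := fun _ _ => eq_refl |}.

Lemma precomp_injective_Prod (X Y : AbGroup) (f : Hom X Y) (K : Type) (A : AbGroup) :
  precomp_injective f A -> precomp_injective f (Prod K A).
Proof.
  intros Hf h1 h2 H y. apply functional_extensionality. intro k.
  apply (Hf (compH (projH k) h1) (compH (projH k) h2)).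
  intro x. simpl. rewrite H. reflexivity.
Qed.

Lemma precomp_injective_subgroup (X Y G : AbGroup) (f : Hom X Y) (S : subgroup G) :
  precomp_injective f G -> precomp_injective f (subgroup_group S).
Proof.
  intros Hf h1 h2 H y. apply sub_eq.
  apply (Hf (compH (inclH S) h1) (compH (inclH S) h2)).
  intro x. simpl. rewrite H. reflexivity.
Qed.

Lemma precomp_surjective_image (K : Type) (Y D G : AbGroup) (f : Hom (FreeSum K) Y)
  (g : Hom D G) :
  precomp_surjective f D -> precomp_surjective f (subgroup_group (image_subgroup g)).
Proof.
  intros Hf h.
  set (g' := corestr (image_subgroup g) g (fun d => ex_intro _ d eq_refl)).
  assert (g'_surj : forall n, exists d, g' d = n).
  { intros [n [d Hd]]. exists d. apply sub_eq. exact Hd. }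
  destruct (FreeSum_projective g' g'_surj h) as [h0 Hh0].
  destruct (Hf h0) as [e He].
  exists (compH g' e). intro x. simpl. rewrite He. apply Hh0.
Qed.

Lemma local_subgroup_contains (X Y G : AbGroup) (f : Hom X Y) (S : subgroup G)
  (h : Hom Y G) :
  precomp_injective f G -> precomp_surjective f (subgroup_group S) ->
  (forall x, S (h (f x))) -> forall y, S (h y).
Proof.
  intros Hinj Hsurj HS y.
  destruct (Hsurj (corestr S (compH h f) HS)) as [h' Hh'].
  rewrite (Hinj h (compH (inclH S) h')).
  - exact (proj2_sig (h' y)).
  - intro x. simpl. rewrite Hh'. reflexivity.
Qed.

Definition Lunit_inv (L : localization) (Y : AbGroup) (b : Lob L (Lob L Y)) : Lob L Y :=
  proj1_sig (constructive_indefinite_description _ (proj2 (Lunit_iso L Y) b)).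

Lemma Lunit_invK L Y b : Lunit L (Lob L Y) (Lunit_inv L Y b) = b.
Proof. unfold Lunit_inv. destruct (constructive_indefinite_description _ _); auto. Qed.

Lemma Lunit_invD L Y b1 b2 :
  Lunit_inv L Y (gadd b1 b2) = gadd (Lunit_inv L Y b1) (Lunit_inv L Y b2).
Proof. apply (proj1 (Lunit_iso L Y)). rewrite hfun_add, !Lunit_invK. reflexivity. Qed.

Definition local_ext (L : localization) {X Y : AbGroup} (f : Hom X (Lob L Y)) :
  Hom (Lob L X) (Lob L Y).
Proof.
  refine {| hfun := fun z => Lunit_inv L Y (Lmap L f z) |}.
  intros. rewrite hfun_add. apply Lunit_invD.
Defined.

Lemma local_ext_Lunit L X Y (f : Hom X (Lob L Y)) x : local_ext L f (Lunit L X x) = f x.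
Proof.
  simpl. apply (proj1 (Lunit_iso L Y)). rewrite Lunit_invK. apply Lunit_nat.
Qed.

(* The two composites [L h_i o a_{LX}] agree by naturality, and [a_{LX} = L a_X]. *)
Lemma Lunit_precomp_injective L X Y : precomp_injective (Lunit L X) (Lob L Y).
Proof.
  intros h1 h2 H y. apply (proj1 (Lunit_iso L Y)).
  rewrite <- (Lunit_nat L h1), <- (Lunit_nat L h2), Lunit_idem, <- !Lmap_comp.
  apply Lmap_ext. intro x. simpl. apply H.
Qed.

Lemma Lunit_precomp_surjective L X Y : precomp_surjective (Lunit L X) (Lob L Y).
Proof. intro f. exists (local_ext L f). apply local_ext_Lunit. Qed.

Theorem mainTheorem4 (L : localization) (K : Type)
  (g : Hom (Lob L (FreeSum K)) (Prod K (Lob L Zgrp)))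
  (hg : forall x : FreeSum K, g (Lunit L (FreeSum K) x) = sum_unit L x) :
  let N := image_subgroup g in
  Lf_local (Lunit L (FreeSum K)) (subgroup_group N) /\
  (forall x : FreeSum K, N (sum_unit L x)) /\
  (forall S : subgroup (Prod K (Lob L Zgrp)),
     (forall x : FreeSum K, S (sum_unit L x)) ->
     Lf_local (Lunit L (FreeSum K)) (subgroup_group S) ->
     forall y, N y -> S y).
Proof.
  intros N.
  assert (Prod_inj : precomp_injective (Lunit L (FreeSum K)) (Prod K (Lob L Zgrp)))
    by apply precomp_injective_Prod, Lunit_precomp_injective.
  split; [split | split].
  - apply precomp_injective_subgroup, Prod_inj.
  - apply precomp_surjective_image, Lunit_precomp_surjective.
  - intro x. exists (Lunit L (FreeSum K) x). apply hg.
  - intros S HS [_ S_surj] y [z <-].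
    apply (local_subgroup_contains g Prod_inj S_surj).
    intro x. rewrite hg. apply HS.
Qed.
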